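(* There is no pure state $|\Phi\rangle\in\mathcal H_1\otimes\mathcal H_2\otimes\mathcal H_3\otimes\mathcal H_4$, $\mathcal H_i=\mathbb C^2$, whose Schmidt ranks satisfy simultaneously $\mathrm{Sch}\#^{3,4}_{1,2}(|\Phi\rangle)=4$, $\mathrm{Sch}\#^{1,3}_{2,4}(|\Phi\rangle)=2$ and $\mathrm{Sch}\#^{1,4}_{2,3}(|\Phi\rangle)=2$.
   Context: $\mathrm{Sch}\#^{S}_{T}(|\Phi\rangle)$ denotes the Schmidt rank of $|\Phi\rangle$ with respect to the bipartition of the four qubits into the set $S$ and its complement $T$ (number of nonzero Schmidt coefficients). *)

From HB Require Import structures.
From mathcomp Require Import all_boot all_order all_algebra.
Set Implicit Arguments. Unset Strict Implicit. Unset Printing Implicit Defensive.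
Import Order.TTheory GRing.Theory Num.Theory.
Local Open Scope ring_scope.

(* Four qubits, indexed 0..3 (paper's 1..4).  A computational basis state is
   x : {ffun 'I_4 -> 'I_2}; a vector of H1⊗H2⊗H3⊗H4 = (C^2)^{⊗4} is given by
   its coefficient function in that basis. *)
Definition basis4 := {ffun 'I_4 -> 'I_2}.
Definition state4 (C : numClosedFieldType) := {ffun basis4 -> C}.

Definition is_pure_state (C : numClosedFieldType) (phi : state4 C) : Prop :=
  \sum_(x : basis4) `|phi x| ^+ 2 = 1.

(* Coefficient matrix of phi w.r.t. the bipartition S | ~S: rows indexed by
   basis states supported on S (zero outside S), columns by basis states
   supported on ~S; entry = coefficient of the joined basis state.  All other
   rows/columns are zero (padding, which does not affect the rank). *)
Definition coef_mx (C : numClosedFieldType) (S : {set 'I_4}) (phi : state4 C)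
  : 'M[C]_(#|{: basis4}|, #|{: basis4}|) :=
  \matrix_(r, c)
    let x : basis4 := enum_val r in let y : basis4 := enum_val c in
    if [forall i, (i \notin S) ==> (x i == ord0)] &&
       [forall i, (i \in S) ==> (y i == ord0)]
    then phi [ffun i => if i \in S then x i else y i]
    else 0.

(* Schmidt rank w.r.t. S | complement(S) = number of nonzero Schmidt
   coefficients = rank of the coefficient matrix. *)
Definition schmidt_rank (C : numClosedFieldType) (S : {set 'I_4}) (phi : state4 C)
  : nat := \rank (coef_mx S phi).

From mathcomp Require Import all_boot all_order all_algebra all_fingroup ring.
Set Implicit Arguments. Unset Strict Implicit. Unset Printing Implicit Defensive.
Import GRing.Theory.
Local Open Scope ring_scope.

(* Write the coefficients of [phi] as a tensor [P a b c d].  The three Schmidt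
   ranks are the ranks of the 4 x 4 flattenings of [P] along 12|34, 13|24 and
   14|23.  If the 13|24 flattening has rank at most 2, then
   [P a b c d = x_0(a,c) y_0(b,d) + x_1(a,c) y_1(b,d)], and for such tensors the
   12|34 and 14|23 flattenings have the same determinant (a polynomial
   identity).  So these two flattenings cannot have ranks 4 and 2. *)

Section Rank.
Variable F : fieldType.

Lemma mxrank_factor m n r (A : 'M[F]_(m, n)) :
  (\rank A <= r)%N -> exists X : 'M_(m, r), exists Y : 'M_(r, n), A = X *m Y.
Proof.
move=> leAr.
exists (col_ebase A *m pid_mx (\rank A)), (pid_mx (\rank A) *m row_ebase A).
by rewrite mulmxA -(mulmxA (col_ebase A)) mul_pid_mx minnn (minn_idPr leAr) mulmx_ebase.
Qed.

Lemma det_neq0_rank n (A : 'M[F]_n) : (\det A != 0) = (\rank A == n).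
Proof. by rewrite -unitfE -unitmxE -row_free_unit. Qed.

Lemma mxrank_rowsub_supp m n p (f : 'I_p -> 'I_m) (A : 'M[F]_(m, n)) :
  (forall i j, A i j != 0 -> i \in codom f) -> \rank (rowsub f A) = \rank A.
Proof.
move=> suppA; apply/eqP; rewrite eqn_leq mxrankS ?rowsub_sub //=.
apply/mxrankS/row_subP => i; have [/codomP[k ->]|i_out] := boolP (i \in codom f).
  by rewrite -row_rowsub row_sub.
suff -> : row i A = 0 by rewrite sub0mx.
apply/rowP => j; rewrite !mxE; apply: contraNeq i_out; exact: suppA.
Qed.

Lemma mxrank_mxsub_supp m n p q (f : 'I_p -> 'I_m) (g : 'I_q -> 'I_n)
    (A : 'M[F]_(m, n)) :
  (forall i j, A i j != 0 -> (i \in codom f) && (j \in codom g)) ->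
  \rank (mxsub f g A) = \rank A.
Proof.
move=> suppA; rewrite mxsubrc mxrank_rowsub_supp => [|i j]; last first.
  by rewrite mxE => /suppA /andP[].
rewrite -mxrank_tr trmx_mxsub mxrank_rowsub_supp ?mxrank_tr // => j i.
by rewrite mxE => /suppA /andP[].
Qed.
End Rank.

Definition minor2 (R : pzRingType) (A : 'M[R]_4) (i j k l : nat) : R :=
  A (inord i) (inord k) * A (inord j) (inord l)
  - A (inord i) (inord l) * A (inord j) (inord k).
Arguments minor2 {R} A (i j k l)%_N.

(* Laplace expansion along the first two rows. *)
Lemma det_mx44 (R : comNzRingType) (A : 'M[R]_4) :
  \det A = minor2 A 0 1 0 1 * minor2 A 2 3 2 3 - minor2 A 0 1 0 2 * minor2 A 2 3 1 3
         + minor2 A 0 1 0 3 * minor2 A 2 3 1 2 + minor2 A 0 1 1 2 * minor2 A 2 3 0 3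
         - minor2 A 0 1 1 3 * minor2 A 2 3 0 2 + minor2 A 0 1 2 3 * minor2 A 2 3 0 1.
Proof.
pose a i j : R := A (inord i) (inord j).
have Aa (i j : 'I_4) : A i j = a i j by rewrite /a !inord_val.
rewrite /minor2; clearbody a.
do 3 rewrite !(expand_det_row _ ord0) !big_ord_recl !big_ord0 /cofactor.
rewrite !det_mx11 !mxE !Aa /= /bump /= !addn0 !add0n !add1n !inordK //.
ring.
Qed.

Definition bit_hi (k : 'I_4) : 'I_2 := inord k./2.
Definition bit_lo (k : 'I_4) : 'I_2 := inord (odd k).
Definition bits (a b : 'I_2) : 'I_4 := inord (a.*2 + b).

Lemma bit_hi_bits a b : bit_hi (bits a b) = a.
Proof.
by apply/val_inj; case: a b => [[|[|n]] ?] [[|[|m]] ?] //=; rewrite /bit_hi !inordK.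
Qed.

Lemma bit_lo_bits a b : bit_lo (bits a b) = b.
Proof.
by apply/val_inj; case: a b => [[|[|n]] ?] [[|[|m]] ?] //=; rewrite /bit_lo !inordK.
Qed.

Definition flat (R : Type) (T : 'I_2 -> 'I_2 -> 'I_2 -> 'I_2 -> R) : 'M[R]_4 :=
  \matrix_(k, l) T (bit_hi k) (bit_lo k) (bit_hi l) (bit_lo l).

Lemma flat_bits (R : Type) (T : 'I_2 -> 'I_2 -> 'I_2 -> 'I_2 -> R) a b c d :
  flat T (bits a b) (bits c d) = T a b c d.
Proof. by rewrite mxE !bit_hi_bits !bit_lo_bits. Qed.

Lemma eq_flat (R : Type) (T T' : 'I_2 -> 'I_2 -> 'I_2 -> 'I_2 -> R) :
  (forall a b c d, T a b c d = T' a b c d) -> flat T = flat T'.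
Proof. by move=> eqT; apply/matrixP => k l; rewrite !mxE eqT. Qed.

Lemma det_flat_sum2 (R : comNzRingType) (x y : 'I_2 -> 'I_2 -> 'I_2 -> R)
    (T : 'I_2 -> 'I_2 -> 'I_2 -> 'I_2 -> R) :
  (forall a b c d, T a b c d = \sum_(k < 2) x k a c * y k b d) ->
  \det (flat T) = \det (flat (fun a b c d => T a d c b)).
Proof.
move=> defT; rewrite !det_mx44 /minor2 !mxE /bit_hi /bit_lo !inordK //=.
rewrite !defT !big_ord_recl !big_ord0.
ring.
Qed.

Lemma flat_rank2_decomp (F : fieldType) (T : 'I_2 -> 'I_2 -> 'I_2 -> 'I_2 -> F) :
  (\rank (flat T) <= 2)%N ->
  exists x, exists y, forall a b c d, T a b c d = \sum_(k < 2) x k a b * y k c d.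
Proof.
case/mxrank_factor => X [Y XY].
exists (fun k a b => X (bits a b) k), (fun k c d => Y k (bits c d)) => a b c d.
by rewrite -flat_bits XY mxE.
Qed.

Lemma det_flat12_flat14 (F : fieldType) (T : 'I_2 -> 'I_2 -> 'I_2 -> 'I_2 -> F) :
  (\rank (flat (fun a b c d => T a c b d)) <= 2)%N ->
  \det (flat T) = \det (flat (fun a b c d => T a d c b)).
Proof.
case/flat_rank2_decomp => x [y defT].
by apply: (@det_flat_sum2 _ x y T) => a b c d; rewrite -defT.
Qed.

Definition basis_at (s : 'S_4) (a b c d : 'I_2) : basis4 :=
  [ffun i => nth ord0 [:: a; b; c; d] (s^-1 i)%g].

Section SchmidtRank.
Variables (C : numClosedFieldType) (s : 'S_4).
Let S := [set s (inord 0); s (inord 1)].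

Lemma mem_perm_pair j : (s j \in S) = (j < 2)%N.
Proof.
rewrite !inE !(inj_eq perm_inj) -!val_eqE /= !inordK //.
by case: j => [[|[|[|[|n]]]] ?].
Qed.

Lemma basis_at_perm a b c d j : basis_at s a b c d (s j) = nth ord0 [:: a; b; c; d] j.
Proof. by rewrite ffunE permK. Qed.

Lemma basis_at_eta (x : basis4) :
  x = basis_at s (x (s (inord 0))) (x (s (inord 1))) (x (s (inord 2))) (x (s (inord 3))).
Proof.
apply/ffunP => i; rewrite -(permKV s i) basis_at_perm.
case: (s^-1 i)%g => [[|[|[|[|n]]]] ?] //=.
all: by congr (x (s _)); apply/val_inj; rewrite /= inordK.
Qed.

Variable phi : state4 C.

Lemma coef_mx_basis_at a b c d :
  coef_mx S phi (enum_rank (basis_at s a b ord0 ord0))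
                (enum_rank (basis_at s ord0 ord0 c d)) = phi (basis_at s a b c d).
Proof.
have parts j : [/\ s j \notin S -> basis_at s a b ord0 ord0 (s j) = ord0,
                   s j \in S -> basis_at s ord0 ord0 c d (s j) = ord0 &
                   (if s j \in S then basis_at s a b ord0 ord0 (s j)
                    else basis_at s ord0 ord0 c d (s j)) = basis_at s a b c d (s j)].
  by rewrite mem_perm_pair !basis_at_perm; case: j => [[|[|[|[|n]]]] ?].
rewrite mxE /= !enum_rankK.
have -> : [forall i, (i \notin S) ==> (basis_at s a b ord0 ord0 i == ord0)].
  apply/forallP => i; have [out _ _] := parts (s^-1 i)%g.
  by rewrite -(permKV s i); apply/implyP => /out ->.
have -> : [forall i, (i \in S) ==> (basis_at s ord0 ord0 c d i == ord0)].
  apply/forallP => i; have [_ inS _] := parts (s^-1 i)%g.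
  by rewrite -(permKV s i); apply/implyP => /inS ->.
congr (phi _); apply/ffunP => i; have [_ _ join] := parts (s^-1 i)%g.
by rewrite ffunE -(permKV s i) join.
Qed.

Lemma coef_mx_supp r c :
  coef_mx S phi r c != 0 ->
  (r \in codom (fun k => enum_rank (basis_at s (bit_hi k) (bit_lo k) ord0 ord0)))
  && (c \in codom (fun l => enum_rank (basis_at s ord0 ord0 (bit_hi l) (bit_lo l)))).
Proof.
rewrite mxE /=; case: ifP => [|_]; last by rewrite eqxx.
move=> /andP[/forallP x_out /forallP y_in] _.
have out2 : s (inord 2) \notin S by rewrite mem_perm_pair inordK.
have out3 : s (inord 3) \notin S by rewrite mem_perm_pair inordK.
have in0 : s (inord 0) \in S by rewrite mem_perm_pair inordK.
have in1 : s (inord 1) \in S by rewrite mem_perm_pair inordK.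
apply/andP; split; apply/codomP.
- exists (bits (enum_val r (s (inord 0))) (enum_val r (s (inord 1)))).
  apply: enum_val_inj; rewrite bit_hi_bits bit_lo_bits enum_rankK.
  rewrite {1}(basis_at_eta (enum_val r)).
  by rewrite (eqP (implyP (x_out _) out2)) (eqP (implyP (x_out _) out3)).
- exists (bits (enum_val c (s (inord 2))) (enum_val c (s (inord 3)))).
  apply: enum_val_inj; rewrite bit_hi_bits bit_lo_bits enum_rankK.
  rewrite {1}(basis_at_eta (enum_val c)).
  by rewrite (eqP (implyP (y_in _) in0)) (eqP (implyP (y_in _) in1)).
Qed.

Lemma schmidt_rank_flat :
  schmidt_rank S phi = \rank (flat (fun a b c d => phi (basis_at s a b c d))).
Proof.
rewrite /schmidt_rank -(mxrank_mxsub_supp coef_mx_supp).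
by congr (\rank _); apply/matrixP => k l; rewrite [LHS]mxE coef_mx_basis_at mxE.
Qed.
End SchmidtRank.

Lemma schmidt_rank12 (C : numClosedFieldType) (phi : state4 C) :
  schmidt_rank [set inord 0; inord 1] phi
  = \rank (flat (fun a b c d => phi (basis_at 1 a b c d))).
Proof. by have := schmidt_rank_flat 1 phi; rewrite !perm1. Qed.

Lemma schmidt_rank13 (C : numClosedFieldType) (phi : state4 C) :
  schmidt_rank [set inord 0; inord 2] phi
  = \rank (flat (fun a b c d => phi (basis_at 1 a c b d))).
Proof.
have := schmidt_rank_flat (tperm (inord 1) (inord 2)) phi.
rewrite tpermL tpermD; try by rewrite -val_eqE /= !inordK.
move=> ->; congr (\rank _); apply/eq_flat => a b c d; congr (phi _).
apply/ffunP => i; rewrite !ffunE invg1 perm1 tpermV permE.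
by case: i => [[|[|[|[|n]]]] ?] //=; rewrite -!val_eqE /= !inordK.
Qed.

Lemma schmidt_rank14 (C : numClosedFieldType) (phi : state4 C) :
  schmidt_rank [set inord 0; inord 3] phi
  = \rank (flat (fun a b c d => phi (basis_at 1 a d c b))).
Proof.
have := schmidt_rank_flat (tperm (inord 1) (inord 3)) phi.
rewrite tpermL tpermD; try by rewrite -val_eqE /= !inordK.
move=> ->; congr (\rank _); apply/eq_flat => a b c d; congr (phi _).
apply/ffunP => i; rewrite !ffunE invg1 perm1 tpermV permE.
by case: i => [[|[|[|[|n]]]] ?] //=; rewrite -!val_eqE /= !inordK.
Qed.

Theorem mainTheorem8 (C : numClosedFieldType) (phi : state4 C) :
  is_pure_state phi ->
  ~ [/\ schmidt_rank [set (inord 0 : 'I_4); inord 1] phi = 4%N,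
        schmidt_rank [set (inord 0 : 'I_4); inord 2] phi = 2%N &
        schmidt_rank [set (inord 0 : 'I_4); inord 3] phi = 2%N].
Proof.
move=> _ []; rewrite schmidt_rank12 schmidt_rank13 schmidt_rank14.
move=> rank12 rank13 rank14.
have := det_neq0_rank (flat (fun a b c d => phi (basis_at 1 a b c d))).
by rewrite rank12 eqxx det_flat12_flat14 ?rank13 // det_neq0_rank rank14.
Qed.
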